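(* Let $D$ be a delta-matroid on $[n,\overline{n}]$. Let $A,B\subseteq[n]$ be disjoint, and let $S\in\operatorname{AdS}_n$ be disjoint from $A\cup B\cup\overline{A}\cup\overline{B}$. Then $$g_{D/A\setminus B}(S)=g_D(S\cup A\cup\overline{B})-g_D(A\cup\overline{B}).$$
   Context: For a finite $E\subseteq\{1,2,\dots\}$ let $E\cup\overline{E}$ consist of $E$ and formal copies $\overline{i}$ ($i\in E$), with involution $a\mapsto\overline{a}$; $\overline{S}=\{\overline{a}:a\in S\}$; $[n,\overline{n}]$ is the case $E=[n]$. A subset is admissible if it contains at most one of $i,\overline{i}$ for each $i$; $\operatorname{AdS}_n$ is the set of admissible subsets of $[n,\overline{n}]$. In $\mathbb{R}^E$ set $e_{\overline{i}}=-e_i$, $e_S=\sum_{a\in S}e_a$. A delta-matroid on $E\cup\overline{E}$ is a nonempty collection $\mathcal{F}$ of admissible sets of size $|E|$ (feasible sets) such that $\operatorname{Conv}\{e_B:B\in\mathcal{F}\}$ has all edges parallel to some $e_i$ or $e_i\pm e_j$. Its rank function is $g_D(S)=\max_{B\in\mathcal{F}}(|S\cap B|-|\overline{S}\cap B|)$ for admissible $S$. For $i\in E$: $i$ is a loop if no feasible set contains $i$, and a coloop if every feasible set contains $i$. If $i$ is not a loop, the contraction $D/i$ (on $(E\setminus\{i\})\cup\overline{(E\setminus\{i\})}$) has feasible sets $B\setminus\{i\}$ for feasible $B\ni i$; if $i$ is not a coloop, the deletion $D\setminus i$ has feasible sets $B\setminus\{\overline{i}\}$ for feasible $B\ni\overline{i}$;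 the projection $D(i)$ has feasible sets $B\setminus\{i,\overline{i}\}$ for all feasible $B$; if $i$ is a loop or a coloop, $D/i=D\setminus i=D(i)$. For $A\subseteq E$, $D/A$ and $D\setminus A$ are obtained by successively contracting, resp. deleting, all elements of $A$ (the result does not depend on the order); for disjoint $A,B$, $D/A\setminus B$ is obtained by contracting $A$ and then deleting $B$ (same as deleting $B$ then contracting $A$). *)

From HB Require Import structures.
From mathcomp Require Import all_boot all_order all_algebra.
Set Implicit Arguments. Unset Strict Implicit. Unset Printing Implicit Defensive.
Import Order.TTheory GRing.Theory Num.Theory.
Local Open Scope ring_scope.

(* Signed elements of [n, \bar n]: (i, false) stands for the element i+1,
   (i, true) stands for its formal copy \bar{(i+1)}.  A ground set E is a
   subset of 'I_n (i.e. of [n] after the shift i |-> i+1). *)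
Definition selt (n : nat) := ('I_n * bool)%type.

Definition pos n (A : {set 'I_n}) : {set selt n} := [set (i, false) | i in A].
Definition neg n (A : {set 'I_n}) : {set selt n} := [set (i, true) | i in A].

Definition sbar n (a : selt n) : selt n := (a.1, ~~ a.2).
Definition setbar n (S : {set selt n}) : {set selt n} := [set sbar a | a in S].

Definition admissible n (S : {set selt n}) : bool :=
  [forall i : 'I_n, ~~ (((i, false) \in S) && ((i, true) \in S))].

(* e_S in R^n (coordinates outside the ground set are 0 for the sets used) *)
Definition evec n (S : {set selt n}) : 'rV[rat]_n :=
  \row_i (((i, false) \in S)%:R - ((i, true) \in S)%:R).

Definition dotv n (c v : 'rV[rat]_n) : rat := \sum_i c 0 i * v 0 i.

Definition unitv n (i : 'I_n) : 'rV[rat]_n := delta_mx 0 i.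

Definition good_direction n (d : 'rV[rat]_n) : Prop :=
  exists lam : rat, lam != 0 /\
    ((exists i, d = lam *: unitv i) \/
     (exists i j, i != j /\
        (d = lam *: (unitv i + unitv j) \/ d = lam *: (unitv i - unitv j)))).

(* [e_B1, e_B2] is an edge of Conv{e_B : B in F}: the two points are distinct
   and form exactly the set of points of {e_B : B in F} maximizing some linear
   functional (every 1-dimensional face of a polytope is exposed, and all e_B
   for feasible B are vertices of the cube, hence extreme). *)
Definition is_edge n (F : {set {set selt n}}) (B1 B2 : {set selt n}) : Prop :=
  [/\ B1 \in F, B2 \in F, evec B1 != evec B2 &
    exists c : 'rV[rat]_n,
      dotv c (evec B1) = dotv c (evec B2) /\
      forall B, B \in F ->
        dotv c (evec B) <= dotv c (evec B1) /\
        (dotv c (evec B) = dotv c (evec B1) ->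
           evec B = evec B1 \/ evec B = evec B2)].

Definition is_delta_matroid n (E : {set 'I_n}) (F : {set {set selt n}}) : Prop :=
  [/\ F != set0,
      (forall B, B \in F ->
         [/\ admissible B, B \subset pos E :|: neg E & #|B| = #|E|]) &
      (forall B1 B2, is_edge F B1 B2 -> good_direction (evec B1 - evec B2))].

(* rank function g_D(S) = max_{B in F} (|S cap B| - |\bar S cap B|).
   The default -#|S| is a lower bound of every term, so for nonempty F
   this is exactly the maximum over F. *)
Definition rankfun n (F : {set {set selt n}}) (S : {set selt n}) : int :=
  \big[Num.max/ - (#|S|%:Z)]_(B in F)
     ((#|S :&: B|)%:Z - (#|setbar S :&: B|)%:Z).

(* single-element minors (i a loop: no feasible set contains i;
   i a coloop: every feasible set contains i, i.e. none contains \bar i) *)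
Definition projection n (i : 'I_n) (F : {set {set selt n}}) : {set {set selt n}} :=
  [set B :\: [set (i, false); (i, true)] | B in F].

Definition contract1 n (i : 'I_n) (F : {set {set selt n}}) : {set {set selt n}} :=
  if [exists B in F, (i, false) \in B]
  then [set B :\ (i, false) | B in [set B in F | (i, false) \in B]]
  else projection i F.

Definition delete1 n (i : 'I_n) (F : {set {set selt n}}) : {set {set selt n}} :=
  if [exists B in F, (i, true) \in B]
  then [set B :\ (i, true) | B in [set B in F | (i, true) \in B]]
  else projection i F.

Definition contract n (A : {set 'I_n}) (F : {set {set selt n}}) :=
  foldr (@contract1 n) F (enum A).
Definition delete n (A : {set 'I_n}) (F : {set {set selt n}}) :=
  foldr (@delete1 n) F (enum A).

From HB Require Import structures.
From mathcomp Require Import all_boot all_order all_algebra.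
From mathcomp Require Import zify ring.
Set Implicit Arguments. Unset Strict Implicit. Unset Printing Implicit Defensive.
Import Order.TTheory GRing.Theory Num.Theory.
Local Open Scope ring_scope.

(* The feasible sets of a delta-matroid on [n] are the ±1-vertices e_W of the
   cube, and g_D(T) is the maximum of <e_T, e_W>.  Local improvement: if some
   feasible Y beats a feasible X for a linear functional c, then so does some
   feasible Z differing from X in at most two coordinates.  Take Z minimising
   distance per unit of gain; an explicit functional exposes [e_X, e_Z] as an
   edge of the polytope, so e_X - e_Z is parallel to e_i or e_i ± e_j.
   By induction on the elements contracted and deleted, the feasible sets of
   D/A\B are then the restrictions of the maximisers of <e_T, .>, T = A ∪ B̄:
   if a maximiser contains the next element a we keep those, otherwise local
   improvement exchanges every maximiser for T + a into one for T with the
   same restriction.  Finally, a maximiser of <e_{S ∪ T}, .> that maximises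
   <e_T, .> among those is, again by local improvement, a maximiser of
   <e_T, .>; hence g_{D/A\B}(S) = g_D(S ∪ T) - g_D(T). *)

Lemma sum_notin_setD (I : finType) (A D : {set I}) :
  \sum_(i in A) (i \notin D)%:Z = (#|A :\: D|)%:Z.
Proof.
rewrite -sum1_card (big_morph _ PoszD (erefl 0%Z)) !big_mkcond /=.
rewrite [RHS]big_mkcond; apply: eq_bigr => i _; rewrite !inE.
by case: (i \in A); case: (i \in D).
Qed.

Lemma sum_ge0_card_le2 (I : finType) (D : {set I}) (u v : I -> int) :
  (#|D| <= 2)%N -> (forall i, -1 <= v i) -> (forall i, u i = 0 \/ v i = 0) ->
  0 < \sum_(i in D) u i -> 0 <= \sum_(i in D) (u i + v i).
Proof.
move=> cD v_ge uv0; case: (ltngtP #|D| 1) => cD1.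
- by move: cD1; rewrite ltnS leqn0 => /eqP/cards0_eq ->; rewrite !big_set0.
- have /cards2P [i [j [ij ->]]] : #|D| == 2 by rewrite eqn_leq cD cD1.
  rewrite !big_setU1 ?inE //= !big_set1; have := v_ge i; have := v_ge j.
  by case: (uv0 i) => ->; case: (uv0 j) => ->; lia.
- have /cards1P [i ->] : #|D| == 1 by rewrite cD1.
  by rewrite !big_set1; have := v_ge i; case: (uv0 i) => ->; lia.
Qed.

Section SignedSets.
Variable n : nat.
Implicit Types (S T W X Z : {set selt n}) (F : {set {set selt n}}).
Implicit Types (I A B : {set 'I_n}) (c : 'I_n -> int).

Definition ecoord T i : int := ((i, false) \in T)%:Z - ((i, true) \in T)%:Z.

Definition ldot c W : int := \sum_i c i * ecoord W i.

Definition pairing T W : int := ldot (ecoord T) W.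

Definition full W := forall i, ((i, true) \in W) = ~~ ((i, false) \in W).

Definition diff X W : {set 'I_n} := [set i | ((i, false) \in X) != ((i, false) \in W)].

Definition indices T : {set 'I_n} := [set x.1 | x in T].

Definition strip I W : {set selt n} := W :\: [set x | x.1 \in I].

Lemma ecoord_mul_geN1 T W i : -1 <= ecoord T i * ecoord W i.
Proof. by rewrite /ecoord; do 2 case: (_ \in T); do 2 case: (_ \in W). Qed.

Lemma mem_indices a T : a \in T -> a.1 \in indices T.
Proof. exact: imset_f. Qed.

Lemma disjoint_indices S T : [disjoint indices S & indices T] -> [disjoint S & T].
Proof.
move=> dST; apply/pred0P => x /=; apply/negP => /andP [/mem_indices xS /mem_indices xT].
by rewrite (disjointFr dST xS) in xT.
Qed.

Lemma ecoord_notin_indices T i : i \notin indices T -> ecoord T i = 0.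
Proof.
move=> iT; have out b : ((i, b) \in T) = false by apply: contraNF iT => /mem_indices.
by rewrite /ecoord !out.
Qed.

Lemma ecoord_setU S T i : [disjoint S & T] -> ecoord (S :|: T) i = ecoord S i + ecoord T i.
Proof.
move=> dST; rewrite /ecoord !inE.
case Sf: ((i, false) \in S); case St: ((i, true) \in S);
  rewrite ?(disjointFr dST Sf) ?(disjointFr dST St);
  by case: ((i, false) \in T); case: ((i, true) \in T).
Qed.

Lemma ecoord_strip I W i : ecoord (strip I W) i = if i \in I then 0 else ecoord W i.
Proof. by rewrite /ecoord !inE /=; case: (i \in I). Qed.

Lemma card_pairing T W : (#|T :&: W|)%:Z - (#|setbar T :&: W|)%:Z = pairing T W.
Proof.
have cardZ (U : {set selt n}) :
    (#|U|)%:Z = \sum_i (((i, false) \in U)%:Z + ((i, true) \in U)%:Z).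
  rewrite -sum1_card (big_morph _ PoszD (erefl 0%Z)) big_mkcond /=.
  transitivity (\sum_i \sum_(b : bool) ((i, b) \in U)%:Z).
    by rewrite pair_bigA; apply: eq_bigr => -[i b] _; case: (_ \in U).
  by apply: eq_bigr => i _; rewrite big_bool addrC.
have sbarK : involutive (@sbar n) by case=> i b; rewrite /sbar /= negbK.
have mem_setbar a : (a \in setbar T) = (sbar a \in T).
  by rewrite /setbar (can2_imset_pre _ sbarK sbarK) inE.
rewrite !cardZ -sumrB; apply: eq_bigr => i _; rewrite !inE !mem_setbar /ecoord.
by case: ((i, false) \in T); case: ((i, true) \in T);
   case: ((i, false) \in W); case: ((i, true) \in W).
Qed.

Lemma pairingUl S T W : [disjoint S & T] ->
  pairing (S :|: T) W = pairing S W + pairing T W.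
Proof.
move=> dST; rewrite /pairing /ldot -big_split.
by apply: eq_bigr => i _; rewrite ecoord_setU ?mulrDl.
Qed.

Lemma pairing_strip S I W : [disjoint indices S & I] -> pairing S (strip I W) = pairing S W.
Proof.
move=> dSI; apply: eq_bigr => i _; rewrite ecoord_strip.
by case: ifP => // iI; rewrite ecoord_notin_indices ?(disjointFl dSI iI) ?mul0r.
Qed.

Lemma ecoord_full W i : full W -> ecoord W i = if (i, false) \in W then 1 else -1.
Proof. by move=> tW; rewrite /ecoord tW; case: (_ \in W). Qed.

Lemma ecoord_diff X W i : full X -> full W ->
  ecoord W i = if i \in diff X W then - ecoord X i else ecoord X i.
Proof.
move=> tX tW; rewrite !ecoord_full // inE.
by case: ((i, false) \in X); case: ((i, false) \in W).
Qed.

Lemma ecoord_mul_diff X W i : full X -> full W -> i \in diff X W ->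
  ecoord X i * ecoord W i = -1.
Proof.
move=> tX tW iD; rewrite (ecoord_diff i tX tW) iD mulrN ecoord_full //.
by case: (_ \in X); rewrite ?mulr1 ?mulrN1 ?opprK.
Qed.

Lemma ldot_diff c X W : full X -> full W ->
  ldot c W - ldot c X = 2 * \sum_(i in diff X W) c i * ecoord W i.
Proof.
move=> tX tW; rewrite -sumrB mulr_sumr [RHS]big_mkcond /=.
apply: eq_bigr => i _; rewrite [ecoord X i](ecoord_diff i tW tX) !inE eq_sym.
by case: (_ != _); rewrite ?subrr // mulrN opprK mulr_natl mulr2n.
Qed.

Lemma full_diff_inj X W Z : full W -> full Z -> diff X W = diff X Z -> W = Z.
Proof.
move=> tW tZ eD; have pos_eq i : ((i, false) \in W) = ((i, false) \in Z).
  by move/setP/(_ i): eD; rewrite !inE; case: (_ \in X); case: (_ \in W); case: (_ \in Z).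
by apply/setP => -[i []]; rewrite ?tW ?tZ pos_eq.
Qed.

Lemma strip_eq I W Z : full W -> full Z -> diff W Z \subset I -> strip I W = strip I Z.
Proof.
move=> tW tZ sDI; apply/setP => -[i b]; rewrite !inE /=.
case: (boolP (i \in I)) => //= iI.
have : i \notin diff W Z by apply: contra iI; apply/subsetP.
by rewrite inE negbK => /eqP e; case: b; rewrite ?tW ?tZ e.
Qed.

Lemma mem_diff W Z a : full W -> full Z -> a \in W -> a \notin Z -> a.1 \in diff W Z.
Proof.
case: a => i [] tW tZ aW aZ; rewrite inE /=; last by rewrite aW (negbTE aZ).
by move: aW aZ; rewrite tW tZ negbK => /negbTE -> ->.
Qed.

Lemma diff_meets_indices T W Z : full W -> full Z -> pairing T W < pairing T Z ->
  exists2 j, j \in diff W Z & j \in indices T.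
Proof.
move=> tW tZ; rewrite -subr_gt0 /pairing (ldot_diff _ tW tZ) => gt0.
apply/exists_inP; apply: contraTT gt0 => /exists_inPn noI.
by rewrite big1 ?mulr0 // => i /noI iI; rewrite ecoord_notin_indices ?mul0r.
Qed.

Lemma pairing_set1 a W : full W -> pairing [set a] W = if a \in W then 1 else -1.
Proof.
move=> tW; rewrite -card_pairing /setbar imset_set1.
have card1I x : (#|[set x] :&: W|)%:Z = (x \in W)%:Z.
  case: (boolP (x \in W)) => xW; first by rewrite (setIidPl _) ?sub1set ?cards1.
  by rewrite disjoint_setI0 ?cards0 // disjoints1.
case: a => i b; rewrite !card1I /sbar /=.
by case: b; rewrite ?tW; case: (_ \in W).
Qed.

Lemma indices_setU1 a T : indices (a |: T) = a.1 |: indices T.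
Proof. by rewrite /indices imsetU1. Qed.

Lemma mem_strip a I W : a.1 \notin I -> (a \in strip I W) = (a \in W).
Proof. by move=> aI; rewrite !inE (negbTE aI). Qed.

Lemma strip_setU1 i I W : strip (i |: I) W = strip I W :\: [set (i, false); (i, true)].
Proof.
by apply/setP => -[j b]; rewrite !inE /= !xpair_eqE; case: (j == i); case: b.
Qed.

Lemma strip_setU1_mem a I W : full W -> a \in W -> strip (a.1 |: I) W = strip I W :\ a.
Proof.
case: a => i b tW aW; rewrite strip_setU1; apply/setP => -[j b']; rewrite !inE /= !xpair_eqE.
case: (j =P i) => [->|] //=; move: (tW i) aW.
by case: b b' => [] [] //= -> => [/negbTE ->|->]; rewrite ?andbF.
Qed.

Lemma evecE T : evec T = \row_i (ecoord T i)%:~R.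
Proof.
by apply/rowP => i; rewrite !mxE /ecoord intrB; case: (_ \in T); case: (_ \in T).
Qed.

Lemma dotv_evec c W : dotv (\row_i (c i)%:~R) (evec W) = (ldot c W)%:~R.
Proof. by rewrite /dotv rmorph_sum; apply: eq_bigr => i _; rewrite evecE !mxE -intrM. Qed.

Lemma ldot_evec c T W : evec T = evec W -> ldot c T = ldot c W.
Proof.
move=> /rowP eTW; apply: eq_bigr => i _.
by move: (eTW i); rewrite !evecE !mxE => /intr_inj ->.
Qed.

Lemma good_direction_support_card (d : 'rV[rat]_n) :
  good_direction d -> (#|[set i | d 0 i != 0]%R| <= 2)%N.
Proof.
case=> lam [_ [[i ->]|[i [j [_ dE]]]]].
  apply: leq_trans (subset_leq_card (_ : _ \subset [set i])) _; last by rewrite cards1.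
  by apply/subsetP => k; rewrite !inE !mxE eqxx /=; case: (k =P i); rewrite ?mulr0 ?eqxx.
apply: leq_trans (subset_leq_card (_ : _ \subset [set i; j])) _.
  apply/subsetP => k; rewrite !inE; case: dE => ->; rewrite !mxE eqxx /=;
  by case: (k =P i); case: (k =P j); rewrite ?orbT ?addr0 ?subr0 ?mulr0 ?eqxx.
by rewrite cards2; case: (i != j).
Qed.

Lemma good_direction_diff X Z : full X -> full Z ->
  good_direction (evec X - evec Z) -> (#|diff X Z| <= 2)%N.
Proof.
move=> tX tZ /good_direction_support_card; apply: leq_trans; apply: subset_leq_card.
apply/subsetP => i iD; rewrite inE !evecE !mxE (ecoord_diff i tX tZ) iD intrN opprK.
by rewrite ecoord_full //; case: (_ \in X).
Qed.

Lemma rankfunE F T : rankfun F T = \big[Num.max/ - (#|T|%:Z)]_(W in F) pairing T W.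
Proof. by apply: eq_bigr => W _; rewrite card_pairing. Qed.

Lemma pairing_geN_card T W : - (#|T|%:Z) <= pairing T W.
Proof.
rewrite -card_pairing; have : (#|setbar T :&: W| <= #|T|)%N.
  exact: leq_trans (subset_leq_card (subsetIl _ _)) (leq_imset_card _ _).
lia.
Qed.

Lemma rankfun_ge F T W : W \in F -> pairing T W <= rankfun F T.
Proof. by move=> WF; rewrite rankfunE; apply: le_bigmax_cond. Qed.

Lemma rankfun_attained F T : F != set0 -> exists2 W, W \in F & pairing T W = rankfun F T.
Proof.
case/set0Pn=> W0 W0F; rewrite rankfunE.
have [W WF ->] :=
  @eq_bigmax _ _ _ _ W0 (mem F) (pairing T) W0F (fun W _ => pairing_geN_card T W).
by exists W.
Qed.

Lemma rankfunP F T W r : W \in F -> pairing T W = r ->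
  (forall W', W' \in F -> pairing T W' <= r) -> rankfun F T = r.
Proof.
move=> WF <- ub; apply/le_anti; rewrite rankfun_ge // andbT rankfunE.
by apply: bigmax_le => //; apply: pairing_geN_card.
Qed.

Definition argmax F T := [set W in F | pairing T W == rankfun F T].

Lemma argmaxP F T W :
  reflect (W \in F /\ pairing T W = rankfun F T) (W \in argmax F T).
Proof. by rewrite inE; apply: (iffP andP) => -[WF /eqP]. Qed.

(* For T = A ∪ B̄, [minor F T] is the family of feasible sets of D/A\B. *)
Definition minor F T := [set strip (indices T) W | W in argmax F T].

(* [minor1 (i, false)] is [contract1 i] and [minor1 (i, true)] is [delete1 i]. *)
Definition minor1 a F : {set {set selt n}} :=
  if [exists B in F, a \in B] then [set B :\ a | B in [set B in F | a \in B]]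
  else projection a.1 F.

Lemma delete_contract_foldr A B F :
  delete B (contract A F) =
  foldr minor1 F ([seq (i, true) | i <- enum B] ++ [seq (i, false) | i <- enum A]).
Proof. by rewrite foldr_cat !foldr_map. Qed.

Lemma mem_pos A i b : ((i, b) \in pos A) = ~~ b && (i \in A).
Proof. by apply/imsetP/andP => [[j jA [-> ->]]|[/negPf -> iA]]; last exists i. Qed.

Lemma mem_neg A i b : ((i, b) \in neg A) = b && (i \in A).
Proof. by apply/imsetP/andP => [[j jA [-> ->]]|[-> iA]]; last exists i. Qed.

Lemma indices_posU_neg A B : indices (pos A :|: neg B) = A :|: B.
Proof. by rewrite /indices imsetU /pos /neg -!imset_comp !imset_id. Qed.

Lemma mem_map_pair (s : seq 'I_n) i (b c : bool) :
  ((i, b) \in [seq (j, c) | j <- s]) = (b == c) && (i \in s).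
Proof. by apply/mapP/andP => [[j js [-> ->]]|[/eqP -> iS]]; [rewrite eqxx | exists i]. Qed.

End SignedSets.

Section SteepestAscent.
Variables (n : nat) (F : {set {set selt n}}) (c : 'I_n -> int) (X : {set selt n}).

Local Notation gain W := (ldot c W - ldot c X).
Local Notation dist W := ((#|diff X W|)%:Z).

Definition steepest Z :=
  [/\ Z \in F, 0 < gain Z & forall W, W \in F ->
    dist Z * gain W <= gain Z * dist W /\
    (dist Z * gain W = gain Z * dist W -> dist W = 0 \/ dist Z <= dist W)].

Lemma exists_steepest Y : Y \in F -> 0 < gain Y -> exists Z, steepest Z.
Proof.
move=> YF gY; pose slope W : rat := (dist W)%:~R / (gain W)%:~R.
pose P := [pred W | (W \in F) && (0 < gain W)].
have PY : P Y by rewrite /= YF gY.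
case: (arg_minP (fun W => (slope W, #|diff X W|) : rat *l nat) PY).
move=> Z /andP [ZF gZ] minZ; exists Z; split=> // W WF.
have gZ' : 0 < (gain Z)%:~R :> rat by rewrite ltr0z.
case: (ltrP 0 (gain W)) => gW; last first.
  have : dist Z * gain W <= 0 by apply: mulr_ge0_le0.
  have : 0 <= gain Z * dist W by apply: mulr_ge0; [apply: ltW|].
  split=> [|e]; first by lia.
  left; have /eqP : gain Z * dist W = 0 by lia.
  by rewrite mulf_eq0 (gt_eqF gZ) => /eqP.
have /minZ : P W by rewrite /= WF gW.
rewrite lexi_pair => /andP [le_slope le_dist].
have gW' : 0 < (gain W)%:~R :> rat by rewrite ltr0z.
move: le_slope; rewrite /slope ler_pdivrMr // mulrAC ler_pdivlMr // -!intrM ler_int.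
rewrite [gain Z * _]mulrC; split=> // e; right.
move: le_dist; rewrite /slope ler_pdivrMr // mulrAC ler_pdivlMr // -!intrM ler_int.
by rewrite e lexx lez_nat.
Qed.

End SteepestAscent.

Section DeltaMatroid.
Variables (n : nat) (F : {set {set selt n}}).
Hypothesis dmF : is_delta_matroid [set: 'I_n] F.
Implicit Types (S T W X Y Z : {set selt n}).

Lemma feasible_neq0 : F != set0.
Proof. by case: dmF. Qed.

Lemma feasible_full W : W \in F -> full W.
Proof.
case: dmF => _ hF _ /hF [/forallP adm _ cW].
have fst_inj : {in W &, injective (@fst 'I_n bool)}.
  move=> [j b] [k b'] /= jW kW ejk; subst k.
  by case: b b' jW kW => [] [] // jW kW; move: (adm j); rewrite jW kW.
have fstW : [set x.1 | x in W] = setT.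
  by apply/eqP; rewrite eqEcard subsetT /= (card_in_imset fst_inj) cW.
move=> i; have /imsetP [[j b] bW /= ->] : i \in [set x.1 | x in W] by rewrite fstW.
by case: b bW => bW; move: (adm j); rewrite bW /= ?andbT => /negbTE ->; rewrite ?bW.
Qed.

Section SteepestEdge.
Variables (c : 'I_n -> int) (X Z : {set selt n}).
Hypotheses (XF : X \in F) (stZ : steepest F c X Z).

Local Notation gain W := (ldot c W - ldot c X).
Local Notation dist W := ((#|diff X W|)%:Z).

(* The first two terms cancel exactly on X and on the W tying Z for the slope
   [dist / gain]; the last one penalises leaving X outside [diff X Z]. *)
Let expose i : int :=
  2 * dist Z * c i + (gain Z + 2 * (i \notin diff X Z)%:Z) * ecoord X i.

Lemma expose_diff W : W \in F ->
  ldot expose W - ldot expose X =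
  2 * (dist Z * gain W - gain Z * dist W) - 4 * (#|diff X W :\: diff X Z|)%:Z.
Proof.
move=> WF; have tX := feasible_full XF; have tW := feasible_full WF.
have cardE : dist W = \sum_(i in diff X W) 1 by rewrite sumr_const natz.
rewrite !(ldot_diff _ tX tW).
have -> : \sum_(i in diff X W) expose i * ecoord W i =
    2 * dist Z * \sum_(i in diff X W) c i * ecoord W i -
    (gain Z * dist W + 2 * (#|diff X W :\: diff X Z|)%:Z).
  rewrite -sum_notin_setD cardE !mulr_sumr -big_split -sumrB /=; apply: eq_bigr => i iD.
  by rewrite /expose mulrDl -!mulrA (ecoord_mul_diff tX tW iD); ring.
ring.
Qed.

Lemma expose_le W : W \in F ->
  ldot expose W <= ldot expose X /\ (ldot expose W = ldot expose X -> W = X \/ W = Z).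
Proof.
case: stZ => ZF _ minZ WF; have [le_slope eq_slope] := minZ W WF.
have tX := feasible_full XF; have tW := feasible_full WF; have tZ := feasible_full ZF.
have := expose_diff WF; split=> [|eWX]; first by lia.
have sWZ : diff X W \subset diff X Z by rewrite -setD_eq0 -cards_eq0; apply/eqP; lia.
case: (eq_slope _) => [|dW0|le_dist]; first by lia.
  left; apply: (full_diff_inj (X := X) tW tX).
  have /cards0_eq -> : #|diff X W| = 0%N by lia.
  by apply/setP => i; rewrite !inE eqxx.
by right; apply: (full_diff_inj (X := X) tW tZ); apply/eqP; rewrite eqEcard sWZ -lez_nat.
Qed.

Lemma steepest_edge : is_edge F X Z.
Proof.
case: (stZ) => ZF gZ _.
have eXZ : ldot expose Z = ldot expose X.
  by apply/eqP; rewrite -subr_eq0 expose_diff // setDv cards0; apply/eqP; ring.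
split=> //; first by apply/eqP => /(ldot_evec c) eXZc; move: gZ; rewrite eXZc subrr ltxx.
exists (\row_i (expose i)%:~R); rewrite !dotv_evec eXZ; split=> // W WF.
have [le_W eq_W] := expose_le WF; rewrite !dotv_evec ler_int; split=> // /intr_inj /eq_W.
by case=> ->; [left | right].
Qed.

End SteepestEdge.

Lemma local_improvement c X Y : X \in F -> Y \in F -> ldot c X < ldot c Y ->
  exists2 Z, Z \in F & ldot c X < ldot c Z /\ (#|diff X Z| <= 2)%N.
Proof.
move=> XF YF; rewrite -subr_gt0 => /(exists_steepest YF) [Z stZ].
have [ZF gZ _] := stZ; exists Z => //; split; first by rewrite -subr_gt0.
case: dmF => _ _ /(_ X Z (steepest_edge XF stZ)).
exact: good_direction_diff (feasible_full XF) (feasible_full ZF).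
Qed.

Lemma pairing_parity T W W' : W \in F -> W' \in F ->
  pairing T W < pairing T W' -> pairing T W + 2 <= pairing T W'.
Proof.
move=> WF W'F; have := ldot_diff (ecoord T) (feasible_full WF) (feasible_full W'F).
rewrite /pairing; set s := \sum_(i in _) _; lia.
Qed.

Section MinorStep.
Variables (T : {set selt n}) (a : selt n).
Hypothesis aI : a.1 \notin indices T.

Local Notation G := (argmax F T).
Local Notation m := (rankfun F T).
Local Notation I := (indices T).

Lemma pairing_setU1 W : W \in F ->
  pairing (a |: T) W = (if a \in W then 1 else -1) + pairing T W.
Proof.
move=> WF; have tW := feasible_full WF.
rewrite pairingUl ?pairing_set1 // (disjoints1 T a).
by apply: contra aI => /mem_indices.
Qed.

Lemma exists_mem_minor : [exists B in minor F T, a \in B] = [exists W in G, a \in W].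
Proof.
apply/exists_inP/exists_inP => [[_ /imsetP [W WG ->]]|[W WG aW]].
  by rewrite mem_strip //; exists W.
by exists (strip I W); [apply: imset_f | rewrite mem_strip].
Qed.

Lemma argmax_setU1_attained : [exists W in G, a \in W] ->
  argmax F (a |: T) = [set W in G | a \in W].
Proof.
case/exists_inP => W1 /argmaxP [W1F W1m] aW1.
have rankE : rankfun F (a |: T) = 1 + m.
  apply: (rankfunP W1F); first by rewrite pairing_setU1 // aW1 W1m.
  by move=> W WF; rewrite pairing_setU1 //; have := rankfun_ge T WF; case: (a \in W); lia.
apply/setP => W; rewrite !inE rankE; case: (boolP (W \in F)) => //= WF.
rewrite pairing_setU1 //; have := rankfun_ge T WF.
case: (a \in W) => le; rewrite ?andbT ?andbF; first by apply/eqP/eqP; lia.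
by apply/negbTE/eqP; lia.
Qed.

Lemma minor_setU1_attained : [exists W in G, a \in W] ->
  minor1 a (minor F T) = minor F (a |: T).
Proof.
move=> exG; rewrite /minor1 exists_mem_minor exG /minor argmax_setU1_attained //.
have -> : [set B in minor F T | a \in B] = strip I @: [set W in G | a \in W].
  apply/setP => B; rewrite inE; apply/andP/imsetP => [[/imsetP [W WG ->]]|[W]].
    by rewrite mem_strip // => aW; exists W; rewrite // inE WG aW.
  by rewrite inE => /andP [WG aW] ->; rewrite mem_strip // imset_f.
rewrite -imset_comp indices_setU1; apply: eq_in_imset => W.
rewrite inE => /andP [/argmaxP [WF _] aW] /=.
by rewrite strip_setU1_mem //; apply: (feasible_full WF).
Qed.

Section Unattained.
Hypothesis naG : forall W, W \in G -> a \notin W.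

Lemma rank_setU1_unattained : rankfun F (a |: T) = m - 1.
Proof.
have [Wm WmF Wm_m] := rankfun_attained T feasible_neq0.
have WmG : Wm \in G by apply/argmaxP.
apply: (rankfunP WmF); first by rewrite pairing_setU1 // (negbTE (naG WmG)) Wm_m addrC.
move=> W WF; rewrite pairing_setU1 //; have := rankfun_ge T WF.
case: (boolP (a \in W)) => aW le; last by lia.
have WG : W \notin G by apply: contraL aW; apply: naG.
have ltm : pairing T W < pairing T Wm.
  by rewrite Wm_m lt_neqAle le andbT; rewrite inE WF in WG.
by have := pairing_parity WF WmF ltm; lia.
Qed.

(* The exchange: a maximiser W for [a |: T] containing a is improved, for T, by
   some Z differing from W in a.1 and in one more coordinate, which must lie in
   I for the pairing with T to change. *)
Lemma argmax_setU1_unattained W : W \in argmax F (a |: T) ->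
  exists2 Z, Z \in G & strip (a.1 |: I) W = strip (a.1 |: I) Z.
Proof.
case/argmaxP=> WF; rewrite rank_setU1_unattained pairing_setU1 //.
case: (boolP (a \in W)) => aW eW; last by exists W => //; apply/argmaxP; split=> //; lia.
have [Wm WmF Wm_m] := rankfun_attained T feasible_neq0.
have ltm : pairing T W < pairing T Wm by lia.
have [Z ZF [ltZ cardD]] := local_improvement WF WmF ltm.
rewrite -/(pairing T W) -/(pairing T Z) in ltZ.
have ZG : Z \in G.
  by apply/argmaxP; split=> //; have := pairing_parity WF ZF ltZ; have := rankfun_ge T ZF; lia.
have tW := feasible_full WF; have tZ := feasible_full ZF.
exists Z => //; apply: (strip_eq tW tZ).
have aD := mem_diff tW tZ aW (naG ZG).
have [j jD jI] := diff_meets_indices tW tZ ltZ.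
have aj : a.1 != j by apply: contraNneq aI => ->.
have -> : diff W Z = [set a.1; j].
  apply/eqP; rewrite eq_sym eqEcard cards2 aj (leq_trans cardD) // andbT.
  by apply/subsetP => x; rewrite in_set2 => /orP [] /eqP ->.
by apply/subsetP => x; rewrite !inE => /orP [] /eqP ->; rewrite ?eqxx ?jI ?orbT.
Qed.

Lemma minor_setU1_unattained : minor1 a (minor F T) = minor F (a |: T).
Proof.
have nexG : ~~ [exists W in G, a \in W] by apply/exists_inPn.
rewrite /minor1 exists_mem_minor (negbTE nexG) /projection /minor -imset_comp indices_setU1.
rewrite (eq_imset _ (fun W => esym (strip_setU1 a.1 I W))).
apply/eqP; rewrite eqEsubset; apply/andP; split.
  apply: imsetS; apply/subsetP => W WG; have /argmaxP [WF Wm] := WG.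
  apply/argmaxP; split=> //.
  by rewrite pairing_setU1 // (negbTE (naG WG)) Wm rank_setU1_unattained addrC.
by apply/subsetP => _ /imsetP [W /argmax_setU1_unattained [Z ZG ->] ->]; apply: imset_f.
Qed.

End Unattained.

Lemma minor1_minor : minor1 a (minor F T) = minor F (a |: T).
Proof.
case: (boolP [exists W in G, a \in W]) => [|/exists_inPn]; first exact: minor_setU1_attained.
exact: minor_setU1_unattained.
Qed.

End MinorStep.

Lemma foldr_minor1 (L : seq (selt n)) :
  uniq (map fst L) -> foldr (@minor1 n) F L = minor F [set:: L].
Proof.
elim: L => [_|a L IH /= /andP [aL uL]] /=.
  have p0 W : pairing set0 W = 0 by apply: big1 => i _; rewrite /ecoord !inE mul0r.
  have [W0 W0F] := set0Pn _ feasible_neq0.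
  have r0 : rankfun F set0 = 0 by apply: (rankfunP W0F) => // W _; rewrite p0.
  have -> : [set:: [::]] = set0 :> {set selt n} by apply/setP => x; rewrite !inE.
  have G0 : argmax F set0 = F by apply/setP => W; rewrite inE p0 r0 eqxx andbT.
  have strip0 W : strip set0 W = W by apply/setP => x; rewrite !inE.
  by rewrite /minor /indices imset0 G0 (eq_imset _ strip0) imset_id.
rewrite IH // set_cons minor1_minor //.
by apply: contra aL => /imsetP [x xL ->]; apply: map_f; rewrite inE in xL.
Qed.

Lemma argmax_setU_meet S T : [disjoint indices S & indices T] ->
  exists2 X, X \in argmax F T & X \in argmax F (S :|: T).
Proof.
move=> dST; have [W1 W1F W1r] := rankfun_attained (S :|: T) feasible_neq0.
have W1P : W1 \in argmax F (S :|: T) by apply/argmaxP.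
have [X XP maxX] : exists2 X, X \in argmax F (S :|: T) &
    forall W, W \in argmax F (S :|: T) -> pairing T W <= pairing T X.
  by case: (arg_maxP (pairing T) W1P) => X; exists X.
exists X => //; have /argmaxP [XF Xr] := XP.
rewrite inE XF eq_le rankfun_ge //= leNgt; apply/negP => ltX.
have [Wm WmF Wmm] := rankfun_attained T feasible_neq0; rewrite -Wmm in ltX.
have [Z ZF [ltZ cardD]] := local_improvement XF WmF ltX.
rewrite -/(pairing T X) -/(pairing T Z) in ltZ.
suff ZP : Z \in argmax F (S :|: T) by have := maxX Z ZP; rewrite leNgt ltZ.
have tX := feasible_full XF; have tZ := feasible_full ZF.
have : 0 <= pairing (S :|: T) Z - pairing (S :|: T) X.
  rewrite /pairing (ldot_diff _ tX tZ) pmulr_rge0 //.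
  under eq_bigr => i _ do rewrite (ecoord_setU i (disjoint_indices dST)) mulrDl addrC.
  apply: sum_ge0_card_le2 cardD _ _ _ => [i|i|]; first exact: ecoord_mul_geN1.
    case: (boolP (i \in indices T)) => iT; [right|left]; rewrite ecoord_notin_indices ?mul0r //.
    by rewrite (disjointFl dST iT).
  by move: ltZ; rewrite -subr_gt0 /pairing (ldot_diff _ tX tZ) pmulr_rgt0.
by rewrite inE ZF eq_le rankfun_ge //= -Xr subr_ge0.
Qed.

Lemma rank_minor S T : [disjoint indices S & indices T] ->
  rankfun (minor F T) S = rankfun F (S :|: T) - rankfun F T.
Proof.
move=> dST; have pG W : W \in argmax F T ->
    pairing S (strip (indices T) W) = pairing (S :|: T) W - rankfun F T.
  case/argmaxP=> _ WT; rewrite pairing_strip // pairingUl ?WT ?addrK //.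
  exact: disjoint_indices.
have [X XG /argmaxP [_ Xr]] := argmax_setU_meet dST.
apply: (rankfunP (imset_f _ XG)); first by rewrite pG // Xr.
move=> _ /imsetP [W WG ->]; rewrite pG // lerD2r rankfun_ge //.
by case/argmaxP: WG.
Qed.

End DeltaMatroid.

Theorem proposition2p3 (n : nat) (F : {set {set selt n}}) (A B : {set 'I_n})
    (S : {set selt n}) :
  is_delta_matroid [set: 'I_n] F ->
  [disjoint A & B] ->
  admissible S ->
  [disjoint S & pos A :|: pos B :|: neg A :|: neg B] ->
  rankfun (delete B (contract A F)) S =
    rankfun F (S :|: pos A :|: neg B) - rankfun F (pos A :|: neg B).
Proof.
move=> dmF dAB _ dS.
set L := [seq (i, true) | i <- enum B] ++ [seq (i, false) | i <- enum A].
have uL : uniq (map fst L).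
  rewrite map_cat -!map_comp !map_id cat_uniq !enum_uniq andbT /=.
  by apply/hasPn => i; rewrite !mem_enum => /(disjointFr dAB) ->.
have LE : [set:: L] = pos A :|: neg B.
  apply/setP => -[i b]; rewrite !inE mem_cat !mem_map_pair mem_pos mem_neg !mem_enum.
  by rewrite orbC; case: b.
have dSAB : [disjoint indices S & A :|: B].
  apply/pred0P => i /=; apply/negP => /andP [/imsetP [[j b] /(disjointFr dS) jS ->] /= jAB].
  move: jS jAB; rewrite !inE !mem_pos !mem_neg.
  by case: b; case: (j \in A); case: (j \in B).
rewrite delete_contract_foldr (foldr_minor1 dmF uL) LE rank_minor ?indices_posU_neg //.
by rewrite setUA.
Qed.
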